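(* Let $V$ be a Gödel set. In each of the following cases, a sentence $A$ is 1-satisfiable in $G_V$ if and only if $A$ is classically satisfiable: (1) $A$ is propositional (all predicate symbols $0$-ary, no quantifiers), $V$ arbitrary; (2) $A$ is an arbitrary first-order sentence and $0$ is an isolated point of $V$; (3) $A$ is in prenex form, $V$ arbitrary; (4) $A$ is existential, i.e. of the form $\exists\bar x\,B(\bar x)$ with $B$ quantifier-free, $V$ arbitrary.
   Context: A Gödel set is a closed set $V\subseteq[0,1]$ with $0,1\in V$. Formulas are built from atoms, $\bot$, $\wedge,\vee,\supset,\forall,\exists$. A $V$-interpretation $\mathcal I$ consists of a nonempty domain $U$, interpretations of constants and function symbols as usual, and for each $k$-ary predicate symbol a function $U^k\to V$; with constants for elements of $U$ added, $\mathcal I(\bot)=0$, $\wedge,\vee$ are $\min,\max$, $\mathcal I(A\supset B)=1$ if $\mathcal I(A)\le\mathcal I(B)$ and $=\mathcal I(B)$ otherwise, $\forall,\exists$ are $\inf,\sup$ over $U$. A sentence is 1-satisfiable in $G_V$ if some $V$-interpretation gives it value $1$. Classical satisfiability is satisfiability in ordinary two-valued first-order semantics (i.e. with $V=\{0,1\}$). A prenex sentence has the form $Q_1x_1\dots Q_nx_n B$ with $Q_i\in\{\forall,\exists\}$ and $B$ quantifier-free. *)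

From HB Require Import structures.
From mathcomp Require Import all_boot all_order all_algebra.
From mathcomp Require Import all_classical all_reals topology normedtype.
Unset Printing Implicit Defensive.
Import Order.TTheory GRing.Theory Num.Theory numFieldTopology.Exports numFieldNormedType.Exports.
Local Open Scope classical_set_scope.
Local Open Scope ring_scope.

Record signature := Signature {
  fsym : Type; psym : Type; farity : fsym -> nat; parity : psym -> nat }.

Section Syntax.
Variable S : signature.

(* Terms, variables as de Bruijn indices. *)
Inductive fterm : Type :=
| Var : nat -> fterm
| App : forall f : fsym S, ('I_(farity S f) -> fterm) -> fterm.

Inductive fformula : Type :=
| Atom : forall p : psym S, ('I_(parity S p) -> fterm) -> fformula
| Bot : fformula
| And : fformula -> fformula -> fformula
| Or : fformula -> fformula -> fformula
| Imp : fformula -> fformula -> fformula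
| All : fformula -> fformula
| Ex : fformula -> fformula.

Fixpoint tclosed (k : nat) (t : fterm) : Prop :=
  match t with
  | Var n => (n < k)%N
  | App f args => forall i, tclosed k (args i)
  end.

Fixpoint fclosed (k : nat) (A : fformula) : Prop :=
  match A with
  | Atom p args => forall i, tclosed k (args i)
  | Bot => True
  | And B C | Or B C | Imp B C => fclosed k B /\ fclosed k C
  | All B | Ex B => fclosed k.+1 B
  end.

Definition sentence (A : fformula) : Prop := fclosed 0 A.

Fixpoint qfree (A : fformula) : Prop :=
  match A with
  | Atom _ _ | Bot => True
  | And B C | Or B C | Imp B C => qfree B /\ qfree C
  | All _ | Ex _ => False
  end.

Fixpoint propositional (A : fformula) : Prop :=
  match A with
  | Atom p _ => parity S p = 0%N
  | Bot => True
  | And B C | Or B C | Imp B C => propositional B /\ propositional C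
  | All _ | Ex _ => False
  end.

Fixpoint prenex (A : fformula) : Prop :=
  match A with
  | All B | Ex B => prenex B
  | _ => qfree A
  end.

Fixpoint existential (A : fformula) : Prop :=
  match A with
  | Ex B => existential B
  | _ => qfree A
  end.
End Syntax.

Arguments Var {S}.
Arguments App {S}.
Arguments Atom {S}.
Arguments Bot {S}.
Arguments And {S}.
Arguments Or {S}.
Arguments Imp {S}.
Arguments All {S}.
Arguments Ex {S}.
Arguments tclosed {S}.
Arguments fclosed {S}.
Arguments sentence {S}.
Arguments qfree {S}.
Arguments propositional {S}.
Arguments prenex {S}.
Arguments existential {S}.

Section Semantics.
Variable R : realType.

Definition godel_set (V : set R) : Prop :=
  closed V /\ V `<=` `[0, 1] /\ V 0 /\ V 1.

Definition zero_isolated (V : set R) : Prop :=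
  exists2 e : R, 0 < e & forall x, V x -> `|x| < e -> x = 0.

Variable S : signature.

Record interp (V : set R) := Interp {
  dom : Type;
  dom_inh : dom;
  ifun : forall f : fsym S, ('I_(farity S f) -> dom) -> dom;
  ipred : forall p : psym S, ('I_(parity S p) -> dom) -> R;
  ipred_V : forall p args, V (ipred p args) }.

Arguments dom {V}.
Arguments dom_inh {V}.
Arguments ifun {V}.
Arguments ipred {V}.
Arguments ipred_V {V}.

Definition scons (U : Type) (u : U) (rho : nat -> U) : nat -> U :=
  fun n => if n is n'.+1 then rho n' else u.

Section Eval.
Variables (V : set R) (I : interp V).

Fixpoint teval (rho : nat -> dom I) (t : fterm S) : dom I :=
  match t with
  | Var n => rho n
  | App f args => ifun I f (fun i => teval rho (args i))
  end.

Fixpoint feval (rho : nat -> dom I) (A : fformula S) : R :=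
  match A with
  | Atom p args => ipred I p (fun i => teval rho (args i))
  | Bot => 0
  | And B C => Num.min (feval rho B) (feval rho C)
  | Or B C => Num.max (feval rho B) (feval rho C)
  | Imp B C => if feval rho B <= feval rho C then 1 else feval rho C
  | All B => inf (range (fun u => feval (scons _ u rho) B))
  | Ex B => sup (range (fun u => feval (scons _ u rho) B))
  end.

(* value of a sentence (independent of the environment) *)
Definition sval (A : fformula S) : R := feval (fun _ => dom_inh I) A.
End Eval.
Arguments sval {V}.

Definition sat1 (V : set R) (A : fformula S) : Prop :=
  exists I : interp V, sval I A = 1.

Definition csat (A : fformula S) : Prop := sat1 [set x : R | x = 0 \/ x = 1] A.
End Semantics.

Arguments godel_set {R}.
Arguments zero_isolated {R}.
Arguments sat1 {R S}.
Arguments csat R {S}.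

(* Collapsing every truth value to 0 or 1 (sending x > 0 to 1) turns a
   V-interpretation into a classical one with the same domain.  This map
   commutes with min, max, Goedel implication and sup, so it commutes with the
   evaluation of quantifier-free formulas and of existential quantifiers.  For
   inf it is only sub-commuting: an infimum 0 of positive values becomes 1.
   Hence on prenex sentences truth value 1 is preserved (everything above the
   quantifier-free matrix only gets larger), and when 0 is isolated in V every
   truth value is either 0 or bounded away from 0, which rules out the bad
   infimum and gives full commutation.  The converse direction is trivial,
   since {0, 1} is contained in V. *)
From Pilot Require Import Defs.
From mathcomp Require Import all_boot all_order all_algebra.
From mathcomp Require Import all_classical all_reals topology normedtype.
Local Open Scope classical_set_scope.
Local Open Scope ring_scope.
Import Order.TTheory GRing.Theory Num.Theory.

Section Crisp.
Context {R : realDomainType}.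

Definition crisp (x : R) : R := if 0 < x then 1 else 0.

Lemma crisp_gt0 x : 0 < x -> crisp x = 1.
Proof. by rewrite /crisp => ->. Qed.

Lemma crisp_le0 x : x <= 0 -> crisp x = 0.
Proof. by rewrite /crisp leNgt => /negbTE ->. Qed.

Lemma crisp0 : crisp 0 = 0. Proof. exact: crisp_le0. Qed.
Lemma crisp1 : crisp 1 = 1. Proof. exact: crisp_gt0. Qed.

Lemma crisp_bool x : crisp x = 0 \/ crisp x = 1.
Proof. by rewrite /crisp; case: ifP; [right|left]. Qed.

Lemma le_crisp : {homo crisp : x y / x <= y}.
Proof.
move=> x y xy; rewrite /crisp; case: ifP => hx; case: ifP => hy //.
by rewrite (lt_le_trans hx xy) in hy.
Qed.

Lemma crisp_min x y : crisp (Num.min x y) = Num.min (crisp x) (crisp y).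
Proof.
rewrite !minEle; have [xy|/ltW yx] := leP x y; first by rewrite le_crisp.
by case: leP => // cxy; apply/eqP; rewrite eq_le cxy le_crisp.
Qed.

Lemma crisp_max x y : crisp (Num.max x y) = Num.max (crisp x) (crisp y).
Proof.
rewrite !maxEle; have [xy|/ltW yx] := leP x y; first by rewrite le_crisp.
by case: leP => // cxy; apply/eqP; rewrite eq_le cxy le_crisp.
Qed.

Lemma crisp_in01 x : 0 <= crisp x <= 1.
Proof. by case: (crisp_bool x) => ->; rewrite ?lexx ?ler01. Qed.

Lemma crisp_imp x y : 0 <= y ->
  crisp (if x <= y then 1 else y) = if crisp x <= crisp y then 1 else crisp y.
Proof.
move=> y0; have [xy|yx] := leP x y; first by rewrite le_crisp // crisp1.
by rewrite (crisp_gt0 _ (le_lt_trans y0 yx)); case: (crisp_bool y) => ->;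
  rewrite ?lexx // ler10.
Qed.
End Crisp.

Section UnitRange.
Context {R : realType} {U : Type} (u0 : U) (f : U -> R).
Hypothesis f01 : forall u, 0 <= f u <= 1.

Let f_ge0 u : 0 <= f u. Proof. by case/andP: (f01 u). Qed.
Let f_le1 u : f u <= 1. Proof. by case/andP: (f01 u). Qed.

Lemma range_neq0 : range f !=set0.
Proof. by exists (f u0), u0. Qed.

Lemma range_sup_ub u : f u <= sup (range f).
Proof.
apply: sup_upper_bound; last by exists u.
by split; [exact: range_neq0 | exists 1 => _ [v _ <-]].
Qed.

Lemma range_inf_lb u : inf (range f) <= f u.
Proof. by apply: ge_inf; [exists 0 => _ [v _ <-] | exists u]. Qed.

Lemma range_sup_le c : (forall u, f u <= c) -> sup (range f) <= c.
Proof. by move=> fc; apply: ge_sup; [exact: range_neq0 | move=> _ [u _ <-]]. Qed.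

Lemma range_inf_ge c : (forall u, c <= f u) -> c <= inf (range f).
Proof. by move=> cf; apply: lb_le_inf; [exact: range_neq0 | move=> _ [u _ <-]]. Qed.

Lemma range_sup_ge0 : 0 <= sup (range f).
Proof. exact: le_trans (f_ge0 u0) (range_sup_ub u0). Qed.

Lemma range_inf_le1 : inf (range f) <= 1.
Proof. exact: le_trans (range_inf_lb u0) (f_le1 u0). Qed.

Lemma range_sup01 : 0 <= sup (range f) <= 1.
Proof. by rewrite range_sup_ge0 range_sup_le. Qed.

Lemma range_inf01 : 0 <= inf (range f) <= 1.
Proof. by rewrite range_inf_le1 range_inf_ge. Qed.

Lemma le_range_sup (g : U -> R) :
  (forall u, g u <= f u) -> sup (range g) <= sup (range f).
Proof.
move=> gf; apply: ge_sup; first by exists (g u0), u0.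
by move=> _ [u _ <-]; exact: le_trans (gf u) (range_sup_ub u).
Qed.

Lemma le_range_inf (g : U -> R) :
  (forall u, f u <= g u) -> inf (range f) <= inf (range g).
Proof.
move=> fg; apply: lb_le_inf; first by exists (g u0), u0.
by move=> _ [u _ <-]; exact: le_trans (range_inf_lb u) (fg u).
Qed.

End UnitRange.

Section CrispRange.
Context {R : realType} {U : Type} (u0 : U) (f : U -> R).
Hypothesis f01 : forall u, 0 <= f u <= 1.

Let crisp_f01 u : 0 <= (crisp \o f) u <= 1. Proof. exact: crisp_in01. Qed.

Let crisp_sup_le1 : sup (range (crisp \o f)) <= 1.
Proof. by apply: range_sup_le u0 _ _ _ => u; case/andP: (crisp_f01 u). Qed.

Lemma crisp_range_sup : crisp (sup (range f)) = sup (range (crisp \o f)).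
Proof.
apply/eqP; rewrite eq_le; have [pos|npos] := ltP 0 (sup (range f)).
  have [_ [u _ <-] fu_gt0] := sup_gt (range_neq0 u0 f) pos.
  rewrite crisp_gt0 // crisp_sup_le1 andbT.
  by have := range_sup_ub u0 _ crisp_f01 u; rewrite /= crisp_gt0.
have f0 u : crisp (f u) = 0 by apply/crisp_le0/(le_trans (range_sup_ub u0 f f01 u)).
rewrite crisp_le0 // (range_sup_ge0 u0 _ crisp_f01) /=.
by apply: range_sup_le u0 _ _ _ => u; rewrite /= f0.
Qed.

Lemma crisp_range_inf_le : crisp (inf (range f)) <= inf (range (crisp \o f)).
Proof.
have [pos|npos] := ltP 0 (inf (range f)); last first.
  by rewrite crisp_le0 //; case/andP: (range_inf01 u0 _ crisp_f01).
rewrite crisp_gt0 //; apply: range_inf_ge u0 _ _ _ => u.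
by rewrite /= crisp_gt0 // (lt_le_trans pos (range_inf_lb f f01 u)).
Qed.

Lemma crisp_range_inf (e : R) : 0 < e -> (forall u, f u = 0 \/ e <= f u) ->
  crisp (inf (range f)) = inf (range (crisp \o f)).
Proof.
move=> e_gt0 gap; apply/eqP; rewrite eq_le crisp_range_inf_le /=.
have [[u fu0]|nz] := pselect (exists u, f u = 0).
  rewrite crisp_le0; last by rewrite -fu0 (range_inf_lb f f01).
  by have := range_inf_lb _ crisp_f01 u; rewrite /= fu0 crisp0.
have f_ge_e u : e <= f u by case: (gap u) => // fu0; case: nz; exists u.
rewrite crisp_gt0; first by rewrite (range_inf_le1 u0 _ crisp_f01).
exact: lt_le_trans e_gt0 (range_inf_ge u0 _ _ f_ge_e).
Qed.
End CrispRange.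

Section CrispInterp.
Context {R : realType} {S : signature}.

Definition map_interp {V W : set R} (I : interp R S V) (g : R -> R)
    (gW : forall p a, W (g (ipred R S V I p a))) : interp R S W :=
  Interp R S W (dom R S V I) (dom_inh R S V I) (ifun R S V I)
    (fun p a => g (ipred R S V I p a)) gW.

Lemma feval_in01 {V} (V01 : V `<=` `[0, 1]) (I : interp R S V) rho
    (A : fformula S) :
  0 <= feval R S V I rho A <= 1.
Proof.
have u0 := dom_inh R S V I.
elim: A rho => [p args||B IHB C IHC|B IHB C IHC|B IHB C IHC|B IHB|B IHB] rho /=.
- have := V01 _ (ipred_V R S V I p (fun i => teval R S V I rho (args i))).
  by rewrite /= in_itv.
- by rewrite lexx ler01.
- case/andP: (IHB rho) => ? ?; case/andP: (IHC rho) => ? ?.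
  by rewrite minEle; case: ifP => _; apply/andP.
- case/andP: (IHB rho) => ? ?; case/andP: (IHC rho) => ? ?.
  by rewrite maxEle; case: ifP => _; apply/andP.
- by case: ifP => _; rewrite ?lexx ?ler01 ?IHC.
- by apply: range_inf01 u0 _ _ => u; exact: IHB.
- by apply: range_sup01 u0 _ _ => u; exact: IHB.
Qed.

Definition bool_values : set R := [set x : R | x = 0 \/ x = 1].

Lemma bool_values01 : bool_values `<=` `[0, 1].
Proof. by move=> x [->|->]; rewrite /= in_itv /= ?lexx ?ler01. Qed.

Definition crisp_interp {V} (I : interp R S V) : interp R S bool_values :=
  map_interp I crisp (fun p a => crisp_bool _).
End CrispInterp.

Section CrispEval.
Context {R : realType} {S : signature} {V : set R}.
Hypothesis V01 : V `<=` `[0, 1].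
Variable I : interp R S V.

Local Notation eval := (feval R S V I).
Local Notation ceval := (feval R S bool_values (crisp_interp I)).
Local Notation u0 := (dom_inh R S V I).

Let eval01 := feval_in01 V01 I.
Let ceval01 := feval_in01 bool_values01 (crisp_interp I).

Lemma feval_crisp_qfree (A : fformula S) rho :
  qfree A -> ceval rho A = crisp (eval rho A).
Proof.
elim: A rho => [p args||B IHB C IHC|B IHB C IHC|B IHB C IHC|B IHB|B IHB] //= rho.
- by rewrite crisp0.
- by case=> qB qC; rewrite IHB // IHC // crisp_min.
- by case=> qB qC; rewrite IHB // IHC // crisp_max.
- case=> qB qC; rewrite IHB // IHC // crisp_imp //.
  by case/andP: (eval01 rho C).
Qed.

Lemma crisp_feval_le_prenex (A : fformula S) rho :
  prenex A -> crisp (eval rho A) <= ceval rho A.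
Proof.
elim: A rho => [p args||B IHB C IHC|B IHB C IHC|B IHB C IHC|B IHB|B IHB] rho pA;
  try by rewrite feval_crisp_qfree.
- apply: le_trans (crisp_range_inf_le u0 _ (fun u => eval01 _ B)) _.
  by apply: le_range_inf u0 _ (fun u => crisp_in01 _) _ _ => u; exact: IHB.
- rewrite /= (crisp_range_sup u0); last by move=> u; exact: eval01.
  by apply: le_range_sup u0 _ (fun u => ceval01 _ B) _ _ => u; exact: IHB.
Qed.

Section ZeroIsolated.
Variables (e : R) (e_gt0 : 0 < e).
Hypotheses (V1 : V 1) (V_gap : forall {x}, V x -> `|x| < e -> x = 0).

Let e_le1 : e <= 1.
Proof.
rewrite leNgt; apply/negP => e_gt1.
by have := V_gap V1; rewrite normr1 => /(_ e_gt1) /eqP; rewrite oner_eq0.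
Qed.

Lemma feval_gap (A : fformula S) rho : eval rho A = 0 \/ e <= eval rho A.
Proof.
elim: A rho => [p args||B IHB C IHC|B IHB C IHC|B IHB C IHC|B IHB|B IHB] rho /=.
- set x := ipred _ _ _ _ _ _; have Vx : V x by exact: ipred_V.
  have [ex|xe] := leP e x; [by right | left].
  have /andP [x_ge0 _] := eval01 rho (Atom p args).
  by apply: V_gap; rewrite // ger0_norm.
- by left.
- by rewrite minEle; case: ifP.
- by rewrite maxEle; case: ifP.
- by case: ifP => _; [right|].
- have [[u fu0]|nz] := pselect (exists u, eval (scons _ u rho) B = 0).
    left; apply/eqP; rewrite eq_le -{1}fu0 (range_inf_lb _ (fun v => eval01 _ B)).
    by case/andP: (range_inf01 u0 _ (fun v => eval01 (scons _ v rho) B)).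
  right; apply: range_inf_ge u0 _ _ _ => u.
  by case: (IHB (scons _ u rho)) => // fu0; case: nz; exists u.
- have [[u fu_ge]|nz] := pselect (exists u, e <= eval (scons _ u rho) B).
    by right; apply: le_trans fu_ge (range_sup_ub u0 _ (fun v => eval01 _ B) u).
  left; apply/eqP; rewrite eq_le (range_sup_ge0 u0 _ (fun v => eval01 _ B)) andbT.
  apply: range_sup_le u0 _ _ _ => u.
  by case: (IHB (scons _ u rho)) => [->|fu_ge] //; case: nz; exists u.
Qed.

Lemma feval_crisp (A : fformula S) rho : ceval rho A = crisp (eval rho A).
Proof.
elim: A rho => [p args||B IHB C IHC|B IHB C IHC|B IHB C IHC|B IHB|B IHB] rho /=.
- by [].
- by rewrite crisp0.
- by rewrite IHB IHC crisp_min.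
- by rewrite IHB IHC crisp_max.
- by rewrite IHB IHC crisp_imp //; case/andP: (eval01 rho C).
- rewrite (crisp_range_inf u0 _ (fun v => eval01 _ B) _ e_gt0); last first.
    by move=> u; exact: feval_gap.
  by congr (inf (image _ _)); apply: funext => u; rewrite IHB.
- rewrite (crisp_range_sup u0); last by move=> u; exact: eval01.
  by congr (sup (image _ _)); apply: funext => u; rewrite IHB.
Qed.
End ZeroIsolated.
End CrispEval.

Lemma qfree_prenex (S : signature) (A : fformula S) : qfree A -> prenex A.
Proof. by case: A. Qed.

Lemma propositional_qfree (S : signature) (A : fformula S) :
  propositional A -> qfree A.
Proof. by elim: A => //= B IHB C IHC [/IHB ? /IHC ?]. Qed.

Lemma existential_prenex (S : signature) (A : fformula S) :
  existential A -> prenex A.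
Proof. by elim: A => //= B IHB /IHB. Qed.

Section Satisfiability.
Context {R : realType} {S : signature} {V : set R}.
Implicit Type A : fformula S.

Lemma csat_sat1 A : V 0 -> V 1 -> csat R A -> sat1 V A.
Proof.
move=> V0 V1 [I IA]; have IV p a : V (id (ipred R S _ I p a)).
  by case: (ipred_V R S _ I p a) => ->.
(* Only the declared value set changes, so the value is the same by conversion. *)
by exists (map_interp I id IV).
Qed.

Lemma sat1_csat_prenex A : V `<=` `[0, 1] -> prenex A -> sat1 V A -> csat R A.
Proof.
move=> V01 pA [I IA]; exists (crisp_interp I); apply/le_anti.
have /andP [_ ->] :=
  feval_in01 bool_values01 (crisp_interp I) (fun _ => dom_inh R S V I) A.
have := crisp_feval_le_prenex V01 I _ (fun _ => dom_inh R S V I) pA.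
by rewrite /Defs.sval in IA; rewrite IA crisp1.
Qed.

Lemma sat1_csat_zero_isolated A : V `<=` `[0, 1] -> V 1 -> zero_isolated V ->
  sat1 V A -> csat R A.
Proof.
move=> V01 V1 [e e_gt0 V_gap] [I IA]; exists (crisp_interp I).
by rewrite /Defs.sval in IA *; rewrite (feval_crisp V01 I _ e_gt0 V1 V_gap) IA crisp1.
Qed.
End Satisfiability.

Theorem theorem2p1 (R : realType) (S : signature) (V : set R) :
  godel_set V ->
  (forall A : fformula S, propositional A -> (sat1 V A <-> csat R A)) /\
  (zero_isolated V ->
     forall A : fformula S, sentence A -> (sat1 V A <-> csat R A)) /\
  (forall A : fformula S, sentence A -> prenex A -> (sat1 V A <-> csat R A)) /\
  (forall A : fformula S, sentence A -> existential A ->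
     (sat1 V A <-> csat R A)).
Proof.
move=> [_ [V01 [V0 V1]]].
have back A : csat R A -> sat1 V A by exact: csat_sat1.
have by_prenex A : prenex A -> sat1 V A <-> csat R A.
  by move=> pA; split; [exact: sat1_csat_prenex | exact: back].
split; [|split; [|split]].
- by move=> A /propositional_qfree/qfree_prenex/by_prenex.
- by move=> zi A _; split; [exact: sat1_csat_zero_isolated | exact: back].
- by move=> A _ /by_prenex.
- by move=> A _ /existential_prenex/by_prenex.
Qed.
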